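(* For every $n\ge 3$, under the uniform model the expected Sackin index is $$E_U(S_n)=\frac{n}{2n-3}\,{}_3F_2\!\left(\begin{matrix}2,\ 2,\ 2-n\\ 1,\ 4-2n\end{matrix};2\right)=\frac{n}{2n-3}\sum_{k=0}^{n-2}\frac{(2)_k(2)_k(2-n)_k}{(1)_k(4-2n)_k}\cdot\frac{2^k}{k!},$$ where $(a)_k=a(a+1)\cdots(a+k-1)$ (the hypergeometric series terminates at $k=n-2$).
   Context: $\mathcal{BT}_n$ is the set of (isomorphism classes of) binary phylogenetic trees with leaves bijectively labeled by $\{1,\dots,n\}$ (rooted, every internal node with exactly two children); $|\mathcal{BT}_n|=(2n-3)!!$. The Sackin index is $S(T)=\sum_{i=1}^n\delta_T(i)$, where $\delta_T(i)$ is the number of arcs from the root to leaf $i$. $S_n$ is $S(T)$ for random $T\in\mathcal{BT}_n$. The uniform model gives every $T\in\mathcal{BT}_n$ probability $1/(2n-3)!!$; $E_U$ is expectation under it. ${}_pF_q$ denotes the generalized hypergeometric function $\sum_{k\ge0}\frac{(a_1)_k\cdots(a_p)_k}{(b_1)_k\cdots(b_q)_k}\frac{z^k}{k!}$. *)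

From HB Require Import structures.
From mathcomp Require Import all_boot all_order all_algebra.
From Stdlib Require List.
Set Implicit Arguments. Unset Strict Implicit. Unset Printing Implicit Defensive.
Import Order.TTheory GRing.Theory Num.Theory.

Inductive btree : Type :=
| Leaf of nat
| Node of btree & btree.

Fixpoint labels (t : btree) : seq nat :=
  match t with
  | Leaf a => [:: a]
  | Node l r => labels l ++ labels r
  end.

Fixpoint leaf_depths (t : btree) : seq nat :=
  match t with
  | Leaf _ => [:: 0]
  | Node l r => map S (leaf_depths l ++ leaf_depths r)
  end.

Definition sackin (t : btree) : nat := sumn (leaf_depths t).

Fixpoint min_label (t : btree) : nat :=
  match t with
  | Leaf a => a
  | Node l r => minn (min_label l) (min_label r)
  end.

(* Canonical representative of an isomorphism class (children unordered):
   at each internal node the left subtree contains the smaller minimal label. *)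
Fixpoint canonical (t : btree) : bool :=
  match t with
  | Leaf _ => true
  | Node l r => [&& canonical l, canonical r & min_label l < min_label r]
  end.

(* t is (the canonical representative of) an element of BT_n:
   leaves bijectively labelled by {1,...,n}. *)
Definition is_BT (n : nat) (t : btree) : bool :=
  canonical t && perm_eq (labels t) (iota 1 n).

Definition enumerates_BT (n : nat) (s : seq btree) : Prop :=
  List.NoDup s /\ (forall t, List.In t s <-> is_BT n t).

(* expected Sackin index under the uniform model, given an enumeration of BT_n *)
Definition EU_sackin (s : seq btree) : rat :=
  (sumn (map sackin s))%:R / (size s)%:R.

Definition poch (a : rat) (k : nat) : rat := \prod_(i < k) (a + i%:R).

From HB Require Import structures.
From mathcomp Require Import all_boot all_order all_algebra.
From mathcomp Require Import zify ring lra.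
Import Order.TTheory GRing.Theory Num.Theory.

(* Every tree of BT_{n+1} arises in exactly one way by
   grafting the leaf n+1 onto one of the 2n-1 edges (the root edge included)
   of a tree of BT_n; pruning that leaf is the inverse operation.  This gives
   an explicit duplicate-free enumeration enumBT n of BT_n, the count
   |BT_{n+1}| = (2n-1) |BT_n|, and, by tracking how grafting changes the leaf
   depths, a recurrence for the total Sackin index.  Hence the mean satisfies
        E_{n+1} = (n+1)/(2n-1) (2 E_n + 1).  For the terminating 3F2 sum F_n of the statement,
   the contiguity relations of its summands and a Zeilberger certificate
   telescope F_{n+1} - 2n/(2n-3) F_n to 1, so that n/(2n-3) F_n satisfies the
   same recurrence for n >= 3.  Both sides equal 5 at n = 3, hence agree for
   all n >= 3; finally every enumeration of BT_n is a permutation of enumBT n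
   and so has the same mean. *)

Set Implicit Arguments. Unset Strict Implicit.

Fixpoint eqbt (t u : btree) : bool :=
  match t, u with
  | Leaf a, Leaf b => a == b
  | Node l r, Node l' r' => eqbt l l' && eqbt r r'
  | _, _ => false
  end.

Lemma eqbtP : Equality.axiom eqbt.
Proof.
elim=> [a|l IHl r IHr] [b|l' r'] /=; try by constructor.
- by apply: (iffP eqP) => [->|[]].
- apply: (iffP andP) => [[/IHl -> /IHr ->]//|[<- <-]].
  by split; [apply/IHl|apply/IHr].
Qed.

HB.instance Definition _ := hasDecEq.Build btree eqbtP.

Definition nleaves (t : btree) : nat := size (labels t).

Lemma nleaves_Node l r : nleaves (Node l r) = nleaves l + nleaves r.
Proof. by rewrite /nleaves /= size_cat. Qed.

Lemma nleaves_gt0 t : 0 < nleaves t.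
Proof. by elim: t => [a|l IHl r IHr] //; rewrite nleaves_Node; lia. Qed.

Lemma size_leaf_depths t : size (leaf_depths t) = nleaves t.
Proof.
by elim: t => [a|l IHl r IHr] //=; rewrite size_map size_cat IHl IHr nleaves_Node.
Qed.

(* Every leaf of a subtree sits one level deeper in the parent tree. *)
Lemma sackin_Node l r :
  sackin (Node l r) = sackin l + nleaves l + sackin r + nleaves r.
Proof.
have sumn_mapS (s : seq nat) : sumn (map S s) = sumn s + size s.
  by elim: s => //= x s ->; lia.
by rewrite /sackin /= sumn_mapS sumn_cat size_cat !size_leaf_depths; lia.
Qed.

Lemma min_label_in t : min_label t \in labels t.
Proof.
elim: t => [a|l IHl r IHr] /=; first by rewrite inE.
rewrite mem_cat; case: (leqP (min_label l) (min_label r)) => _.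
  by rewrite IHl.
by rewrite IHr orbT.
Qed.

Lemma sumn_affine (T : eqType) (f g : T -> nat) a b (s : seq T) :
  (forall t, t \in s -> g t = a * f t + b) ->
  sumn (map g s) = a * sumn (map f s) + b * size s.
Proof.
elim: s => /= [|t s IH] H; first by lia.
rewrite H ?mem_head // IH; first by lia.
by move=> x xs; apply: H; rewrite inE xs orbT.
Qed.

(* Grafting: [graft m t] lists the 2|t|-1 trees obtained by subdividing an
   edge of t (the root edge included) and hanging a new leaf m there, as a
   right child; when m exceeds all labels of a canonical t, these are
   canonical again. *)
Fixpoint graft (m : nat) (t : btree) : seq btree :=
  Node t (Leaf m) ::
  (if t is Node l r then
     [seq Node l' r | l' <- graft m l] ++ [seq Node l r' | r' <- graft m r]
   else [::]).

Fixpoint prune (m : nat) (t : btree) : btree :=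
  match t with
  | Leaf a => Leaf a
  | Node l r => if r == Leaf m then l else Node (prune m l) (prune m r)
  end.

Section Grafting.

Variable m : nat.

Lemma labels_graft t w : w \in graft m t -> perm_eq (labels w) (m :: labels t).
Proof.
elim: t w => [a|l IHl r IHr] w /=.
  by rewrite inE => /eqP -> /=; rewrite (perm_catC [:: a] [:: m]).
rewrite inE => /orP[/eqP -> /=|]; first by rewrite perm_catC.
rewrite mem_cat => /orP[/mapP[l' Hl' ->]|/mapP[r' Hr' ->]] /=.
  by rewrite -cat_cons perm_cat2r IHl.
apply: (@perm_trans _ (labels l ++ m :: labels r)); first by rewrite perm_cat2l IHr.
by rewrite -cat1s perm_catCA.
Qed.

Lemma nleaves_graft t w : w \in graft m t -> nleaves w = (nleaves t).+1.
Proof. by move/labels_graft/perm_size. Qed.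

Lemma mem_graft t w : w \in graft m t -> m \in labels w.
Proof. by move/labels_graft/perm_mem ->; rewrite inE eqxx. Qed.

Lemma size_graft t : size (graft m t) = (nleaves t).*2.-1.
Proof.
elim: t => [a|l IHl r IHr] //=.
rewrite size_cat !size_map IHl IHr nleaves_Node.
by have := nleaves_gt0 l; have := nleaves_gt0 r; lia.
Qed.

(* Total Sackin index of all graftings of t: each of the 2|t|-1 graftings
   adds, besides the old index, the depth of the new leaf and one unit per
   leaf below the subdivided edge. *)
Lemma sackin_graft t :
  sumn [seq sackin w | w <- graft m t] =
  (nleaves t).*2.+2 * sackin t + nleaves t + 1.
Proof.
elim: t => [a|l IHl r IHr] //=.
rewrite map_cat sumn_cat -!map_comp.
rewrite (@sumn_affine _ sackin (sackin \o Node^~ r) 1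
                       (nleaves l + sackin r + nleaves r).+1); last first.
  by move=> w /nleaves_graft Hw /=; rewrite sackin_Node Hw; lia.
rewrite (@sumn_affine _ sackin (sackin \o Node l) 1
                       (sackin l + nleaves l + (nleaves r).+1)); last first.
  by move=> w /nleaves_graft Hw /=; rewrite sackin_Node Hw; lia.
rewrite IHl IHr !size_graft !sackin_Node !nleaves_Node /=.
have := nleaves_gt0 l; have := nleaves_gt0 r; rewrite /sackin /nleaves /=.
move: (size (labels l)) (size (labels r)) => nl nr; nia.
Qed.

(* Below a leaf label larger than all others, grafting keeps the minimum
   label of every subtree, hence preserves canonicity. *)
Lemma min_label_graft t w : {in labels t, forall x, x < m} ->
  w \in graft m t -> min_label w = min_label t.
Proof.
elim: t w => [a|l IHl r IHr] w Hlt /=.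
  by rewrite inE => /eqP -> /=; apply/minn_idPl/ltnW/Hlt; rewrite inE.
rewrite inE => /orP[/eqP -> /=|]; first exact/minn_idPl/ltnW/Hlt/min_label_in.
rewrite mem_cat => /orP[/mapP[l' Hl' ->]|/mapP[r' Hr' ->]] /=.
  by rewrite (IHl l') // => x xl; apply: Hlt; rewrite /= mem_cat xl.
by rewrite (IHr r') // => x xr; apply: Hlt; rewrite /= mem_cat xr orbT.
Qed.

Lemma canonical_graft t w : canonical t -> {in labels t, forall x, x < m} ->
  w \in graft m t -> canonical w.
Proof.
elim: t w => [a|l IHl r IHr] w Hc Hlt /=.
  by rewrite inE => /eqP -> /=; rewrite Hlt // inE.
rewrite inE => /orP[/eqP -> /=|].
  by apply/andP; split; last exact/Hlt/(min_label_in (Node l r)).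
move: Hc => /= /and3P[cl cr lt].
have Hl : {in labels l, forall x, x < m}.
  by move=> x xl; apply: Hlt; rewrite /= mem_cat xl.
have Hr : {in labels r, forall x, x < m}.
  by move=> x xr; apply: Hlt; rewrite /= mem_cat xr orbT.
rewrite mem_cat => /orP[/mapP[l' Hl' ->]|/mapP[r' Hr' ->]] /=.
  by rewrite (IHl l') // cr (min_label_graft Hl Hl') lt.
by rewrite (IHr r') // cl (min_label_graft Hr Hr') lt.
Qed.

Lemma prune_id t : m \notin labels t -> prune m t = t.
Proof.
elim: t => [a|l IHl r IHr] //=; rewrite mem_cat negb_or => /andP[nl nr].
case: eqP => [er|_]; first by move: nr; rewrite er inE eqxx.
by rewrite IHl // IHr.
Qed.

Lemma prune_graft t w : m \notin labels t -> w \in graft m t -> prune m w = t.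
Proof.
elim: t w => [a|l IHl r IHr] w Hn /=.
  by rewrite inE => /eqP -> /=; rewrite eqxx.
rewrite inE => /orP[/eqP -> /=|]; first by rewrite eqxx.
move: Hn; rewrite /= mem_cat negb_or => /andP[nl nr].
rewrite mem_cat => /orP[/mapP[l' Hl' ->]|/mapP[r' Hr' ->]] /=.
  case: eqP => [er|_]; first by move: nr; rewrite er inE eqxx.
  by rewrite (IHl l') // prune_id.
case: eqP => [er|_]; last by rewrite (IHr r') // prune_id.
by move: (nleaves_graft Hr') (nleaves_gt0 r); rewrite er /nleaves /=; lia.
Qed.

Lemma uniq_graft t : m \notin labels t -> uniq (graft m t).
Proof.
elim: t => [a|l IHl r IHr] //=.
rewrite mem_cat negb_or => /andP[nl nr].
rewrite mem_cat negb_or cat_uniq !map_inj_uniq ?IHl ?IHr //; last 2 first.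
- by move=> x y [].
- by move=> x y [].
rewrite andbT; apply/and3P; split=> //.
- apply/andP; split; apply/mapP.
  + by move=> -[l' _ [_ er]]; move: nr; rewrite -er inE eqxx.
  + move=> -[r' Hr' [_ er]].
    by move: (nleaves_graft Hr') (nleaves_gt0 r); rewrite -er /nleaves /=; lia.
- apply/hasP => -[u /mapP[r' _ ->] /mapP[l' Hl' [el _]]].
  by move: nl; rewrite el (mem_graft Hl').
Qed.

Lemma uniq_flatten_graft (s : seq btree) : uniq s ->
  {in s, forall t, m \notin labels t} -> uniq (flatten [seq graft m t | t <- s]).
Proof.
elim: s => //= t s IH /andP[ts us] H.
rewrite cat_uniq uniq_graft ?H ?mem_head // IH //=; last first.
  by move=> x xs; apply: H; rewrite inE xs orbT.
rewrite andbT; apply/hasP => -[u /flatten_mapP[t' t's ut'] ut].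
have nt' : m \notin labels t' by apply: H; rewrite inE t's orbT.
move: ts; rewrite -(prune_graft (H t (mem_head _ _)) ut).
by rewrite (prune_graft nt' ut') t's.
Qed.

Lemma labels_prune_lt v : uniq (labels v) -> {in labels v, forall x, x <= m} ->
  v \in graft m (prune m v) -> {in labels (prune m v), forall x, x < m}.
Proof.
move=> uv Hv Hin x xr.
have pv := labels_graft Hin.
have xv : x \in labels v by rewrite (perm_mem pv) inE xr orbT.
rewrite ltn_neqAle Hv // andbT; apply/eqP => exm.
by move: xr uv; rewrite exm (perm_uniq pv) /= => ->.
Qed.

Lemma graft_prune u : canonical u -> uniq (labels u) -> m \in labels u ->
  {in labels u, forall x, x <= m} -> u != Leaf m ->
  canonical (prune m u) && (u \in graft m (prune m u)).
Proof.
elim: u => [a|l IHl r IHr].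
  by move=> _ _; rewrite inE => /eqP ->; rewrite eqxx.
move=> /= /and3P[cl cr lt]; rewrite cat_uniq => /and3P[ul dis ur].
rewrite mem_cat => mlr Hle _.
have Hll : {in labels l, forall x, x <= m}.
  by move=> x xl; apply: Hle; rewrite mem_cat xl.
have Hlr : {in labels r, forall x, x <= m}.
  by move=> x xr; apply: Hle; rewrite mem_cat xr orbT.
case: eqP => [->|nr]; first by rewrite cl; case: (l) => [?|? ?]; rewrite /= mem_head.
rewrite inE mem_cat; case/orP: mlr => [ml|mr].
- have nmr : m \notin labels r by apply: contra dis => mr; apply/hasP; exists m.
  have nl : l != Leaf m.
    apply/eqP => el; move: lt; rewrite el /=.
    by rewrite ltnNge (Hlr _ (min_label_in r)).
  case/andP: (IHl cl ul ml Hll nl) => crl inl.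
  rewrite /= (prune_id nmr) crl cr.
  rewrite -(min_label_graft (labels_prune_lt ul Hll inl) inl) lt.
  by rewrite (map_f (fun l' => Node l' r)) ?orbT.
- have nml : m \notin labels l by apply: contra dis => ml; apply/hasP; exists m.
  case/andP: (IHr cr ur mr Hlr (introN eqP nr)) => crr inr.
  rewrite /= (prune_id nml) crr cl.
  rewrite -(min_label_graft (labels_prune_lt ur Hlr inr) inr) lt.
  by rewrite (map_f (Node l)) ?orbT.
Qed.

End Grafting.

Fixpoint enumBT (n : nat) : seq btree :=
  match n with
  | 0 => [::]
  | 1 => [:: Leaf 1]
  | n'.+1 => flatten [seq graft n t | t <- enumBT n']
  end.

Lemma enumBT_SS n : enumBT n.+2 = flatten [seq graft n.+2 t | t <- enumBT n.+1].
Proof. by []. Qed.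

Lemma iota_perm_last n : perm_eq (iota 1 n.+1) (n.+1 :: iota 1 n).
Proof. by rewrite -{1}[n.+1]addn1 iotaD add1n /= -cat1s perm_catC. Qed.

Lemma enumBT_spec n : 0 < n ->
  uniq (enumBT n) /\ forall t, (t \in enumBT n) = is_BT n t.
Proof.
elim: n => // -[_ _|n IH _].
  split => // t; rewrite inE /is_BT; apply/eqP/andP => [->//|[_ pt]].
  case: t pt => [a|l r] pt.
    by move: (perm_small_eq (isT : size (iota 1 1) <= 1) pt) => -[->].
  move/perm_size: pt (nleaves_gt0 l) (nleaves_gt0 r).
  by rewrite /= size_cat /nleaves; lia.
case: (IH (ltn0Sn _)) => us ms.
have lt_labels t : t \in enumBT n.+1 -> {in labels t, forall x, x < n.+2}.
  by rewrite ms => /andP[_ pt] x; rewrite (perm_mem pt) mem_iota; lia.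
have notin_labels t : t \in enumBT n.+1 -> n.+2 \notin labels t.
  by move=> tin; apply/negP => /(lt_labels _ tin); rewrite ltnn.
rewrite enumBT_SS; split; first exact: uniq_flatten_graft.
move=> u; apply/flatten_mapP/idP => [[t tin uin]|/andP[cu pu]].
  move: (tin); rewrite ms => /andP[ct pt].
  rewrite /is_BT (canonical_graft ct (lt_labels _ tin) uin) /=.
  rewrite (perm_trans (labels_graft uin)) // perm_sym.
  by rewrite (perm_trans (iota_perm_last n.+1)) // perm_cons perm_sym.
have uu : uniq (labels u) by rewrite (perm_uniq pu) iota_uniq.
have mu : n.+2 \in labels u by rewrite (perm_mem pu) mem_iota; lia.
have le : {in labels u, forall x, x <= n.+2}.
  by move=> x; rewrite (perm_mem pu) mem_iota; lia.
have nl : u != Leaf n.+2.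
  by apply/eqP => eu; move/perm_size: pu; rewrite eu /= size_iota.
case/andP: (graft_prune cu uu mu le nl) => cr inr.
exists (prune n.+2 u) => //; rewrite ms /is_BT cr /=.
rewrite -(perm_cons n.+2) perm_sym (perm_trans _ (labels_graft inr)) // perm_sym.
by rewrite (perm_trans pu) // iota_perm_last.
Qed.

Lemma nleaves_enumBT n t : t \in enumBT n -> nleaves t = n.
Proof.
case: n => // n; case: (enumBT_spec (ltn0Sn n)) => _ ->.
by case/andP=> _ /perm_size; rewrite size_iota.
Qed.

Lemma size_enumBT n : size (enumBT n.+2) = (n.+1).*2.-1 * size (enumBT n.+1).
Proof.
rewrite enumBT_SS size_flatten /shape -map_comp.
rewrite (@sumn_affine _ (fun=> 0) _ 0 (n.+1).*2.-1) //.
by move=> t tin /=; rewrite size_graft (nleaves_enumBT tin).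
Qed.

Lemma sackin_enumBT n :
  sumn (map sackin (enumBT n.+2)) =
  (n.+2).*2 * sumn (map sackin (enumBT n.+1)) + n.+2 * size (enumBT n.+1).
Proof.
rewrite enumBT_SS map_flatten sumn_flatten -!map_comp.
rewrite (@sumn_affine _ sackin (fun t => sumn (map sackin (graft n.+2 t)))
                       (n.+2).*2 n.+2) //.
by move=> t tin /=; rewrite sackin_graft (nleaves_enumBT tin); lia.
Qed.

Lemma size_enumBT_gt0 n : 0 < size (enumBT n.+1).
Proof.
elim: n => // n IH; rewrite size_enumBT muln_gt0 IH andbT; lia.
Qed.

Local Open Scope ring_scope.

Lemma EU_sackin_rec n : (0 < n)%N ->
  EU_sackin (enumBT n.+1) =
  n.+1%:R / (2 * n%:R - 1) * (2 * EU_sackin (enumBT n) + 1).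
Proof.
case: n => // n _; rewrite /EU_sackin sackin_enumBT size_enumBT.
have hC : (size (enumBT n.+1))%:R != 0 :> rat.
  by rewrite pnatr_eq0 -lt0n size_enumBT_gt0.
have -> : ((n.+1).*2.-1 = 2 * n + 1)%N by lia.
rewrite -mul2n !(natrD, natrM) -[n.+2%:R]natr1 -[n.+1%:R]natr1.
field; rewrite hC /=; apply/eqP => h.
by have := ler0n rat n; lra.
Qed.

Lemma pochS (b : rat) k : poch b k.+1 = poch b k * (b + k%:R).
Proof. by rewrite /poch big_ord_recr. Qed.

Lemma poch_shift (b : rat) k : b * poch (b + 1) k = poch b k * (b + k%:R).
Proof.
rewrite -pochS /poch big_ord_recl addr0; congr (_ * _).
by apply: eq_bigr => i _; rewrite lift0 -natr1 addrAC addrA.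
Qed.

Lemma poch_up (b c : rat) k : c = b + 1 -> b != 0 ->
  poch c k = poch b k * (b + k%:R) / b.
Proof. by move=> -> hb; rewrite -poch_shift mulrC mulKf. Qed.

Lemma poch1 k : poch 1 k = k`!%:R.
Proof.
elim: k => [|k IH]; first by rewrite /poch big_ord0.
by rewrite pochS IH factS natrM mulrC -addn1 natrD addrC.
Qed.

Lemma poch2 k : poch 2 k = (k.+1)`!%:R.
Proof.
elim: k => [|k IH]; first by rewrite /poch big_ord0.
by rewrite pochS IH [(k.+2)`!]factS natrM mulrC -[k.+2]addn2 natrD addrC.
Qed.

Lemma poch_neq0 (b : rat) k :
  (forall i : nat, (i < k)%N -> b + i%:R != 0) -> poch b k != 0.
Proof.
elim: k => [|k IH] H; first by rewrite /poch big_ord0 oner_neq0.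
by rewrite pochS mulf_neq0 ?IH ?H // => i ik; apply: H; rewrite ltnS ltnW.
Qed.

Lemma poch_negn (i k : nat) : (i < k)%N -> poch (- i%:R) k = 0.
Proof.
by move=> ik; rewrite /poch (bigD1 (Ordinal ik)) //= addNr mul0r.
Qed.

Definition hterm (n k : nat) : rat :=
  (poch 2 k * poch 2 k * poch (2 - n%:R) k)
    / (poch 1 k * poch (4 - 2 * n%:R) k) * 2 ^+ k / (k`!)%:R.

Lemma htermE n k :
  hterm n k = (k.+1)%:R ^+ 2 * 2 ^+ k * poch (2 - n%:R) k / poch (4 - 2 * n%:R) k.
Proof.
rewrite /hterm poch1 poch2 factS natrM.
have hf : (k`!)%:R != 0 :> rat by rewrite pnatr_eq0 -lt0n fact_gt0.
have [->|hp] := eqVneq (poch (4 - 2 * n%:R) k) 0; last by field; rewrite hp.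
by rewrite !mulr0 !invr0 !mulr0 !mul0r.
Qed.

Lemma hterm0 n : hterm n 0 = 1.
Proof. by rewrite htermE /poch !big_ord0 expr0 !mulr1 expr1n. Qed.

Lemma hterm_eq0 n k : (2 <= n)%N -> (n <= k.+1)%N -> hterm n k = 0.
Proof.
move=> n2 nk; rewrite htermE (_ : 2 - n%:R = - (n - 2)%:R) ?poch_negn ?mulr0 ?mul0r //.
  by rewrite ltn_subLR // addn1 (leq_ltn_trans nk).
by rewrite natrB // opprB.
Qed.

(* The two rational functions relating neighbouring summands, and the
   certificate of Zeilberger's algorithm for the recurrence in n. *)
Section Certificate.

Variable F : fieldType.
Implicit Types a j : F.

(* hterm n k / hterm (n+1) k, at a = n and j = k *)
Definition ratio_n a j : F :=
  2 * (3 - 2 * a) * (1 - a + j) / ((2 - 2 * a + j) * (3 - 2 * a + j)).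

(* hterm (n+1) (k+1) / hterm (n+1) k, at a = n and j = k *)
Definition ratio_k a j : F :=
  2 * (j + 2) ^+ 2 * (1 - a + j) / ((j + 1) ^+ 2 * (2 - 2 * a + j)).

Definition cert a j : F :=
  (j - 2 * j ^+ 2 - j ^+ 3 - (2 * a - 2)) / ((j + 1) ^+ 2 * (2 * a - 2 - j)).

(* The rational identity behind the telescoping: dividing
   hterm (n+1) k - 2n/(2n-3) hterm n k = G(n,k+1) - G(n,k),
   with G(n,k) = hterm (n+1) k * cert n k, by hterm (n+1) k. *)
Lemma cert_identity a j :
  j + 1 != 0 -> j + 2 != 0 -> 2 * a - 3 != 0 ->
  2 * a - 2 - j != 0 -> 2 - 2 * a + j != 0 -> 3 - 2 * a + j != 0 ->
  1 - 2 * a / (2 * a - 3) * ratio_n a j = ratio_k a j * cert a (j + 1) - cert a j.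
Proof.
move=> h1 h2 h3 h4 h5 h6; rewrite /ratio_n /ratio_k /cert; field.
have -> : 2 * a - 2 - (j + 1) = - (3 - 2 * a + j) by ring.
have -> : j + 1 + 1 = j + 2 by ring.
by rewrite oppr_eq0 h1 h2 h3 h4 h5 h6.
Qed.

End Certificate.

Lemma range_bounds n k : (3 <= n)%N -> (k < n)%N ->
  [/\ 3 <= n%:R :> rat, 0 <= k%:R :> rat & k%:R + 1 <= n%:R :> rat].
Proof. by move=> n3 kn; rewrite natr1 !ler_nat. Qed.

Lemma htermSn n k :
  hterm n.+1 k = (k.+1)%:R ^+ 2 * 2 ^+ k * poch (1 - n%:R) k / poch (2 - 2 * n%:R) k.
Proof.
rewrite htermE -[n.+1%:R]natr1.
have -> : 2 - (n%:R + 1) = 1 - n%:R :> rat by ring.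
by have -> : 4 - 2 * (n%:R + 1) = 2 - 2 * n%:R :> rat by ring.
Qed.

Lemma poch_2_2n_neq0 n k : (k < n)%N -> poch (2 - 2 * n%:R) k != 0.
Proof.
move=> kn; apply: poch_neq0 => i ik.
have : (i + 2)%:R < (2 * n)%:R :> rat by rewrite ltr_nat; lia.
by rewrite natrD natrM => h; apply/eqP => e; lra.
Qed.

Lemma hterm_predn n k : (3 <= n)%N -> (k < n)%N ->
  hterm n k = hterm n.+1 k * ratio_n n%:R k%:R.
Proof.
move=> n3 kn; have [ha hj hk] := range_bounds n3 kn.
have hP := poch_2_2n_neq0 kn.
rewrite htermE htermSn /ratio_n (@poch_up (1 - n%:R) (2 - n%:R))
  ?(@poch_up (3 - 2 * n%:R) (4 - 2 * n%:R))
  ?(@poch_up (2 - 2 * n%:R) (3 - 2 * n%:R));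
  try (by ring); try (by apply/eqP => h; lra).
field; rewrite hP ?andbT /=.
by repeat (apply/andP; split); apply/eqP => h; lra.
Qed.

Lemma hterm_succk n k : (3 <= n)%N -> (k < n)%N ->
  hterm n.+1 k.+1 = hterm n.+1 k * ratio_k n%:R k%:R.
Proof.
move=> n3 kn; have [ha hj hk] := range_bounds n3 kn.
have hP := poch_2_2n_neq0 kn.
rewrite !htermSn /ratio_k !pochS [2 ^+ k.+1]exprS -[k.+2%:R]natr1 -[k.+1%:R]natr1.
field; rewrite hP ?andbT /=.
by repeat (apply/andP; split); apply/eqP => h; lra.
Qed.

Definition telescoper (n k : nat) : rat := hterm n.+1 k * cert n%:R k%:R.

Lemma hterm_telescope n k : (3 <= n)%N -> (k < n)%N ->
  hterm n.+1 k - 2 * n%:R / (2 * n%:R - 3) * hterm n k =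
  telescoper n k.+1 - telescoper n k.
Proof.
move=> n3 kn; have [ha hj hk] := range_bounds n3 kn.
rewrite /telescoper (hterm_predn n3 kn) (hterm_succk n3 kn) -[k.+1%:R]natr1.
rewrite mulrCA -{1}[hterm n.+1 k]mulr1 -mulrBr cert_identity -?mulrA -?mulrBr //;
  by apply/eqP => h; lra.
Qed.

Definition hsum (n : nat) : rat := \sum_(k < n.-1) hterm n k.

Lemma hsum_rec n : (3 <= n)%N ->
  hsum n.+1 = 2 * n%:R / (2 * n%:R - 3) * hsum n + 1.
Proof.
move=> n3.
(* the extra summand k = n - 1 vanishes *)
have hsumE : hsum n = \sum_(k < n) hterm n k.
  case: n n3 => // n n3.
  by rewrite /hsum big_ord_recr /= (@hterm_eq0 n.+1 n) ?addr0 //; lia.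
have : hsum n.+1 - 2 * n%:R / (2 * n%:R - 3) * hsum n = 1.
  rewrite hsumE /hsum /= mulr_sumr -sumrB.
  rewrite (eq_bigr (fun k : 'I_n => telescoper n k.+1 - telescoper n k)); last first.
    by move=> k _; apply: hterm_telescope.
  rewrite -(big_mkord xpredT (fun k => telescoper n k.+1 - telescoper n k)).
  have vanish : hterm n.+1 n = 0 by apply: hterm_eq0; lia.
  rewrite telescope_sumr // /telescoper vanish hterm0 mul0r mul1r /cert.
  have : (3 : rat) <= n%:R by rewrite ler_nat.
  by move=> ha; field; apply/eqP => h; lra.
by move/eqP; rewrite subr_eq addrC => /eqP.
Qed.

Definition sackin_formula (n : nat) : rat := n%:R / (2 * n%:R - 3) * hsum n.

Lemma sackin_formula_rec n : (3 <= n)%N ->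
  sackin_formula n.+1 = n.+1%:R / (2 * n%:R - 1) * (2 * sackin_formula n + 1).
Proof.
move=> n3; have : (3 : rat) <= n%:R by rewrite ler_nat.
rewrite /sackin_formula hsum_rec // -natr1 => ha.
by field; rewrite ?andbT; repeat (apply/andP; split); apply/eqP => h; lra.
Qed.

Lemma sackin_formula3 : sackin_formula 3 = 5.
Proof.
rewrite /sackin_formula /hsum /= big_ord_recr big_ord1 hterm0.
rewrite htermE /poch !big_ord1 /=.
by field.
Qed.

Lemma EU_sackin3 : EU_sackin (enumBT 3) = 5.
Proof.
rewrite /EU_sackin.
have -> : sumn (map sackin (enumBT 3)) = 15%N by [].
have -> : size (enumBT 3) = 3%N by [].
by field.
Qed.

(* Both sides satisfy the same first-order recurrence from n = 3 on. *)
Lemma EU_sackin_enumBT n : (3 <= n)%N -> EU_sackin (enumBT n) = sackin_formula n.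
Proof.
elim: n => // n IH; rewrite leq_eqVlt => /orP[/eqP <-|n3].
  by rewrite EU_sackin3 sackin_formula3.
by rewrite EU_sackin_rec ?sackin_formula_rec ?IH //; lia.
Qed.

Lemma EU_sackin_perm (s s' : seq btree) : perm_eq s s' -> EU_sackin s = EU_sackin s'.
Proof.
by move=> p; rewrite /EU_sackin (perm_size p) (perm_sumn (perm_map sackin p)).
Qed.

Lemma In_mem (T : eqType) (x : T) (s : seq T) : List.In x s <-> x \in s.
Proof.
elim: s => [|y s IH] //=; rewrite inE IH.
by split=> [[->|xs]|/orP[/eqP ->|xs]]; [rewrite eqxx | rewrite xs orbT | left | right].
Qed.

Lemma uniq_NoDup (T : eqType) (s : seq T) : uniq s <-> List.NoDup s.
Proof.
elim: s => [|y s IH] /=; first by split => // _; constructor.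
split=> [/andP[ys /IH us]|H].
  by constructor=> // /In_mem; apply/negP.
inversion_clear H as [|? ? ys us]; move/IH: us => ->; rewrite andbT.
by apply/negP => /In_mem.
Qed.

Lemma enumerates_BT_perm n (s : seq btree) : (0 < n)%N ->
  enumerates_BT n s -> perm_eq s (enumBT n).
Proof.
move=> n0 [/uniq_NoDup us mem_s]; have [ue me] := enumBT_spec n0.
apply: uniq_perm => // t; rewrite me.
by apply/idP/idP => [/In_mem/mem_s|/mem_s/In_mem].
Qed.

Lemma enumerates_enumBT n : (0 < n)%N -> enumerates_BT n (enumBT n).
Proof.
move=> n0; have [ue me] := enumBT_spec n0.
split=> [|t]; first exact/uniq_NoDup.
by rewrite In_mem me.
Qed.

Unset Implicit Arguments.

Theorem mainTheorem18 (n : nat) (hn : (3 <= n)%N) :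
  (exists s, enumerates_BT n s) /\
  (forall s : seq btree, enumerates_BT n s ->
     EU_sackin s =
       n%:R / (2 * n%:R - 3) *
       \sum_(k < n.-1)
         (poch 2 k * poch 2 k * poch (2 - n%:R) k)
           / (poch 1 k * poch (4 - 2 * n%:R) k)
         * 2 ^+ k / (k`!)%:R).
Proof.
have n0 : (0 < n)%N by lia.
split; first by exists (enumBT n); apply: enumerates_enumBT.
move=> s /(enumerates_BT_perm n0) /EU_sackin_perm ->.
(* the right-hand side is sackin_formula n by definition *)
exact: EU_sackin_enumBT.
Qed.
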